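(* In the discrete-time load balancing system described in the context (with parameter $\epsilon>0$ and any Markovian policy), $Q_n^{(\epsilon)}(t+1)U_n^{(\epsilon)}(t)=0$ for all $n\in\{1,\dots,N\}$ and $t\ge0$. Moreover, if the chain $\{\mathbf{Q}(t)\}$ is positive recurrent and its stationary distribution has a finite first moment, then $$\mathbb{E}\big[\|\overline{\mathbf{U}}^{(\epsilon)}\|_1^2\big]\le c_1\epsilon\qquad\text{and}\qquad \mathbb{E}\big[\|\overline{\mathbf{U}}^{(\epsilon)}\|_r^r\big]\le c_r\epsilon\quad (r\in(1,\infty)),$$ where the constants $c_1,c_r$ depend only on $N$, $S_{\max}$ and $r$, not on $\epsilon$.
   Context: Model: a discrete-time system with one dispatcher and $N$ servers; server $n$ has an infinite-buffer FIFO queue of length $Q_n(t)$ at the beginning of slot $t$. Arrivals $A_\Sigma(t)$: integer valued, i.i.d. over $t$, $A_\Sigma(t)\le A_{\max}<\infty$. Service $S_n(t)$: integer valued, i.i.d. over $t$, independent across servers and of arrivals, $S_n(t)\le S_{\max}<\infty$, mean $\mu_n$; $\mu_\Sigma=\sum_n\mu_n$. In each slot the arrivals are routed to one queue by a rule depending only on $\mathbf{Q}(t)$; $A_n(t)$ is the number routed to queue $n$. Dynamics: $Q_n(t+1)=Q_n(t)+A_n(t)-S_n(t)+U_n(t)$ with unused service $U_n(t)=\max\{S_n(t)-Q_n(t)-A_n(t),0\}$. In the system with parameter $\epsilon>0$ the arrival mean is $\mu_\Sigma-\epsilon$, and superscript $(\epsilon)$ marks its quantities. $\overline{\mathbf{U}}^{(\epsilon)}$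 denotes the unused-service vector $\mathbf{U}(t)$ when $\mathbf{Q}(t)$ is distributed according to the stationary distribution. $\|\mathbf{x}\|_r=(\sum_n|x_n|^r)^{1/r}$. *)

From HB Require Import structures.
From mathcomp Require Import all_boot all_order all_algebra.
From mathcomp Require Import all_classical all_reals all_analysis.
Set Implicit Arguments. Unset Strict Implicit. Unset Printing Implicit Defensive.
Import Order.TTheory GRing.Theory Num.Theory.
Local Open Scope ring_scope.

(* A queue-length vector Q(t) = (Q_1(t),...,Q_N(t)), servers indexed by 'I_N. *)
Notation state N := {ffun 'I_N -> nat}.

(* A_n(t): all A_Sigma arrivals of the slot are routed to queue i. *)
Definition routed (N : nat) (i : 'I_N) (a : nat) (n : 'I_N) : nat :=
  if n == i then a else 0%N.

(* Unused service U_n(t) = max{S_n(t) - Q_n(t) - A_n(t), 0}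
   (truncated nat subtraction is exactly max{.,0}). *)
Definition unused (N : nat) (q : state N) (a : nat) (s : 'I_N -> nat)
  (i : 'I_N) (n : 'I_N) : nat :=
  (s n - (q n + routed i a n))%N.

(* Q_n(t+1) = Q_n(t) + A_n(t) - S_n(t) + U_n(t) (exact: the value is >= 0). *)
Definition next_state (N : nat) (q : state N) (a : nat) (s : 'I_N -> nat)
  (i : 'I_N) : state N :=
  [ffun n => (q n + routed i a n + unused q a s i n - s n)%N].

Definition pmf_mean (R : realType) (K : nat) (p : nat -> R) : R :=
  \sum_(k < K.+1) (k%:R * p k).

Definition is_pmf (R : realType) (K : nat) (p : nat -> R) : Prop :=
  (forall k, 0 <= p k) /\ (forall k, (K < k)%N -> p k = 0) /\
  \sum_(k < K.+1) p k = 1.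

(* The system with parameter eps:
   - pA : law of A_Sigma(t) (i.i.d. over t), supported on {0..Amax};
   - pS n : law of S_n(t) (i.i.d. over t, independent across n and of
     arrivals), supported on {0..Smax}, mean mu_n;
   - pol q i : probability that the arrivals are routed to queue i when
     Q(t) = q (a Markovian, possibly randomized, policy);
   - E[A_Sigma] = mu_Sigma - eps with eps > 0. *)
Definition lb_system (R : realType) (N Amax Smax : nat) (pA : nat -> R)
  (pS : 'I_N -> nat -> R) (pol : state N -> 'I_N -> R) (eps : R) : Prop :=
  is_pmf Amax pA /\
  (forall n, is_pmf Smax (pS n)) /\
  (forall q i, 0 <= pol q i) /\
  (forall q, \sum_(i < N) pol q i = 1) /\
  0 < eps /\
  pmf_mean Amax pA = \sum_(n < N) pmf_mean Smax (pS n) - eps.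

(* Probability of (A_Sigma = a, S = s, route = i) given Q(t) = q. *)
Definition weight (R : realType) (N Smax : nat) (pA : nat -> R)
  (pS : 'I_N -> nat -> R) (pol : state N -> 'I_N -> R) (q : state N)
  (a : nat) (s : {ffun 'I_N -> 'I_Smax.+1}) (i : 'I_N) : R :=
  pA a * (\prod_(n < N) pS n (s n)) * pol q i.

Definition kernel (R : realType) (N Amax Smax : nat) (pA : nat -> R)
  (pS : 'I_N -> nat -> R) (pol : state N -> 'I_N -> R) (q q' : state N) : R :=
  \sum_(a < Amax.+1) \sum_(s : {ffun 'I_N -> 'I_Smax.+1}) \sum_(i < N)
    weight pA pS pol q a s i *
      (next_state q a (fun n => nat_of_ord (s n)) i == q')%:R.

Definition stationary (R : realType) (N Amax Smax : nat) (pA : nat -> R)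
  (pS : 'I_N -> nat -> R) (pol : state N -> 'I_N -> R) (pi : state N -> R)
  : Prop :=
  [/\ (forall q, 0 <= pi q),
      (\esum_(q in [set: state N]) (pi q)%:E = 1)%E &
      (forall q', (pi q')%:E =
          \esum_(q in [set: state N]) (pi q * kernel Amax Smax pA pS pol q q')%:E)].

Definition finite_first_moment (R : realType) (N : nat) (pi : state N -> R)
  : Prop :=
  (\esum_(q in [set: state N]) (pi q * \sum_(n < N) (q n)%:R)%:E < +oo)%E.

(* E[f(Ubar)] where Ubar is U(t) with Q(t) ~ pi (f >= 0). *)
Definition stat_exp (R : realType) (N Amax Smax : nat) (pA : nat -> R)
  (pS : 'I_N -> nat -> R) (pol : state N -> 'I_N -> R) (pi : state N -> R)
  (f : ('I_N -> nat) -> R) : \bar R :=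
  \esum_(q in [set: state N])
    (pi q * \sum_(a < Amax.+1) \sum_(s : {ffun 'I_N -> 'I_Smax.+1}) \sum_(i < N)
       weight pA pS pol q a s i *
         f (unused q a (fun n => nat_of_ord (s n)) i))%:E.

Definition norm1_sq (R : realType) (N : nat) (u : 'I_N -> nat) : R :=
  (\sum_(n < N) (u n)%:R) ^+ 2.
Definition normr_pow (R : realType) (N : nat) (r : R) (u : 'I_N -> nat) : R :=
  \sum_(n < N) ((u n)%:R `^ r).

From Pilot Require Import Defs.
From HB Require Import structures.
From mathcomp Require Import all_boot all_order all_algebra.
From mathcomp Require Import all_classical all_reals all_analysis.
From mathcomp Require Import zify ring lra.
Set Implicit Arguments. Unset Strict Implicit. Unset Printing Implicit Defensive.
Import Order.TTheory GRing.Theory Num.Theory.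
Local Open Scope ring_scope.

(* The identity Q_n(t+1) U_n(t) = 0 holds because unused service only occurs
   when the queue is emptied.  Summing the dynamics over the servers gives the
   conservation law ||Q(t+1)||_1 = ||Q(t)||_1 + A_Sigma(t) - ||S(t)||_1
   + ||U(t)||_1.  Under the stationary distribution, whose first moment is
   finite, the queue terms cancel in expectation, so E ||U||_1 = mu_Sigma -
   E A_Sigma = eps.  Finally 0 <= U_n <= S_max gives ||U||_1^2 <= N S_max ||U||_1
   and U_n^r <= S_max^(r-1) U_n, whence both bounds. *)

Section Pathwise.
Variables (N : nat) (q : state N) (a : nat) (s : 'I_N -> nat) (i : 'I_N).

Lemma next_state_mul_unused n : (next_state q a s i n * unused q a s i n = 0)%N.
Proof. by rewrite /next_state ffunE /unused; set x := routed i a n; lia. Qed.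

Lemma next_stateD_service n :
  (next_state q a s i n + s n = q n + routed i a n + unused q a s i n)%N.
Proof. by rewrite /next_state ffunE /unused; set x := routed i a n; lia. Qed.

Lemma unused_le_service n : (unused q a s i n <= s n)%N.
Proof. by rewrite /unused; lia. Qed.

Lemma sum_routed : (\sum_(n < N) routed i a n = a)%N.
Proof.
rewrite (bigD1 i) //= big1 ?addn0; first by rewrite /routed eqxx.
by move=> n /negbTE; rewrite /routed => ->.
Qed.

Lemma sum_next_state :
  (\sum_(n < N) next_state q a s i n + \sum_(n < N) s n =
   \sum_(n < N) q n + a + \sum_(n < N) unused q a s i n)%N.
Proof.
rewrite -[X in (_ = _ + X + _)%N]sum_routed -!big_split.
by apply: eq_bigr => n _; exact: next_stateD_service.
Qed.

End Pathwise.

Section ExtendedSums.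
Variable R : realType.
Local Open Scope ereal_scope.

Lemma esumZl (T : choiceType) (I : set T) (a : T -> \bar R) (c : R) :
  (0 <= c)%R -> (forall i, 0 <= a i) ->
  \esum_(i in I) (c%:E * a i) = c%:E * \esum_(i in I) a i.
Proof.
move=> c_ge0 a_ge0; rewrite /esum -ereal_supZl //; last first.
  by apply/set0P; exists (\sum_(x \in set0) a x), set0 => //; exact: fsets_set0.
rewrite image_comp /=; congr ereal_sup; apply: eq_imagel => A _ /=.
by rewrite ge0_mule_fsumr.
Qed.

Lemma exchange_esum (T1 T2 : choiceType) (F : T1 -> T2 -> \bar R) :
  (forall i j, 0 <= F i j) ->
  \esum_(i in [set: T1]) \esum_(j in [set: T2]) F i j =
  \esum_(j in [set: T2]) \esum_(i in [set: T1]) F i j.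
Proof.
move=> F_ge0; rewrite !esum_esum //.
rewrite (reindex_esum (@setT T1 `*`` (fun=> @setT T2)) _ (fun x => (x.2, x.1))) //.
split=> //= [[i1 i2] [j1 j2] _ _ [-> ->] //|[i1 i2] _].
by exists (i2, i1).
Qed.

Lemma esum_pred1 (T : choiceType) (t : T) (f : T -> \bar R) :
  0 <= f t -> \esum_(j in [set: T]) (if j == t then f j else 0) = f t.
Proof.
move=> ft_ge0; rewrite -[RHS](esum_set1 ft_ge0) [RHS]esum_mkcond.
by apply: eq_esum => j _; rewrite in_set1.
Qed.

End ExtendedSums.

Definition total {R : realType} {N : nat} (u : 'I_N -> nat) : R :=
  \sum_(n < N) (u n)%:R.

Lemma total_ge0 (R : realType) (N : nat) (u : 'I_N -> nat) : 0 <= total u :> R.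
Proof. by apply: sumr_ge0 => n _; rewrite ler0n. Qed.

Section OneStep.
Variables (R : realType) (N Amax Smax : nat) (pA : nat -> R)
  (pS : 'I_N -> nat -> R) (pol : state N -> 'I_N -> R).
Hypotheses (pA_pmf : is_pmf Amax pA) (pS_pmf : forall n, is_pmf Smax (pS n)).
Hypotheses (pol_ge0 : forall q i, 0 <= pol q i)
  (pol_sum1 : forall q, \sum_(i < N) pol q i = 1).

Local Notation svec := {ffun 'I_N -> 'I_Smax.+1}.
Local Notation svals s := (fun n => nat_of_ord (s n)).

Definition service_prob (s : svec) : R := \prod_(n < N) pS n (s n).

Lemma sum_service_prob : \sum_(s : svec) service_prob s = 1.
Proof.
rewrite /service_prob -(bigA_distr_bigA (fun n (j : 'I_Smax.+1) => pS n j)) /=.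
by rewrite big1 // => n _; case: (pS_pmf n) => _ [].
Qed.

Lemma service_mean k :
  \sum_(s : svec) service_prob s * (s k)%:R = pmf_mean Smax (pS k).
Proof.
pose F n (j : 'I_Smax.+1) : R := pS n j * (if n == k then (j : nat)%:R else 1).
transitivity (\sum_(s : svec) \prod_(n < N) F n (s n)).
  by apply: eq_bigr => s _; rewrite big_split /= -big_mkcond big_pred1_eq.
rewrite -bigA_distr_bigA /= (bigD1 k) //= [X in _ * X]big1 => [|n nk]; last first.
  by rewrite /F (negbTE nk); under eq_bigr do rewrite mulr1; case: (pS_pmf n) => _ [].
by rewrite mulr1 /F eqxx; apply: eq_bigr => j _; rewrite mulrC.
Qed.

Lemma sum_arrival_prob c : \sum_(a < Amax.+1) pA a * c = c.
Proof. by rewrite -mulr_suml; case: pA_pmf => _ [_ ->]; rewrite mul1r. Qed.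

Definition step_exp q (F : nat -> svec -> 'I_N -> R) : R :=
  \sum_(a < Amax.+1) \sum_(s : svec) \sum_(i < N)
    weight pA pS pol q a s i * F a s i.

Lemma weight_ge0 q a (s : svec) i : 0 <= weight pA pS pol q a s i.
Proof.
rewrite /weight; apply: mulr_ge0; last exact: pol_ge0.
apply: mulr_ge0; first by case: pA_pmf.
by apply: prodr_ge0 => n _; case: (pS_pmf n).
Qed.

Lemma eq_step_exp q F G :
  (forall a s i, F a s i = G a s i) -> step_exp q F = step_exp q G.
Proof.
move=> FG; apply: eq_bigr => a _; apply: eq_bigr => s _; apply: eq_bigr => i _.
by rewrite FG.
Qed.

Lemma ler_step_exp q F G :
  (forall a s i, F a s i <= G a s i) -> step_exp q F <= step_exp q G.
Proof.
move=> FG; apply: ler_sum => a _; apply: ler_sum => s _; apply: ler_sum => i _.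
by apply: ler_wpM2l; [exact: weight_ge0|exact: FG].
Qed.

Lemma step_exp_ge0 q F : (forall a s i, 0 <= F a s i) -> 0 <= step_exp q F.
Proof.
move=> F_ge0; apply: sumr_ge0 => a _; apply: sumr_ge0 => s _.
by apply: sumr_ge0 => i _; apply: mulr_ge0; [exact: weight_ge0|exact: F_ge0].
Qed.

Lemma step_expD q F G :
  step_exp q (fun a s i => F a s i + G a s i) = step_exp q F + step_exp q G.
Proof.
rewrite /step_exp -big_split; apply: eq_bigr => a _; rewrite -big_split.
by apply: eq_bigr => s _; rewrite -big_split; apply: eq_bigr => i _; rewrite mulrDr.
Qed.

Lemma step_expN q F : step_exp q (fun a s i => - F a s i) = - step_exp q F.
Proof.
rewrite /step_exp -sumrN; apply: eq_bigr => a _; rewrite -sumrN.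
by apply: eq_bigr => s _; rewrite -sumrN; apply: eq_bigr => i _; rewrite mulrN.
Qed.

Lemma step_expZ q c F :
  step_exp q (fun a s i => c * F a s i) = c * step_exp q F.
Proof.
rewrite /step_exp mulr_sumr; apply: eq_bigr => a _; rewrite mulr_sumr.
by apply: eq_bigr => s _; rewrite mulr_sumr; apply: eq_bigr => i _; rewrite mulrCA.
Qed.

Lemma step_exp_sum q (F : 'I_N -> nat -> svec -> 'I_N -> R) :
  step_exp q (fun a s i => \sum_(n < N) F n a s i) = \sum_(n < N) step_exp q (F n).
Proof.
rewrite /step_exp.
under eq_bigr do under eq_bigr do under eq_bigr do rewrite mulr_sumr.
under eq_bigr do under eq_bigr do rewrite exchange_big.
by under eq_bigr do rewrite exchange_big; rewrite exchange_big.
Qed.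

Lemma step_exp_split q (F : nat -> R) (G : svec -> R) :
  step_exp q (fun a s _ => F a * G s) =
  (\sum_(a < Amax.+1) pA a * F a) * (\sum_(s : svec) service_prob s * G s).
Proof.
rewrite mulr_suml; apply: eq_bigr => a _; rewrite mulr_sumr.
apply: eq_bigr => s _; rewrite -[RHS]mulr1 -(pol_sum1 q) mulr_sumr.
by apply: eq_bigr => i _; rewrite /weight /service_prob; ring.
Qed.

Lemma step_exp_cst q c : step_exp q (fun _ _ _ => c) = c.
Proof.
rewrite (@eq_step_exp q _ (fun a s _ => c * 1)) => [|a s i]; last by rewrite mulr1.
rewrite step_exp_split sum_arrival_prob.
by under eq_bigr do rewrite mulr1; rewrite sum_service_prob mulr1.
Qed.

Lemma step_exp_arrivals q : step_exp q (fun a _ _ => a%:R) = pmf_mean Amax pA.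
Proof.
rewrite (@eq_step_exp q _ (fun a s _ => a%:R * 1)) => [|a s i]; last by rewrite mulr1.
rewrite step_exp_split; under [X in _ * X]eq_bigr do rewrite mulr1.
by rewrite sum_service_prob mulr1; apply: eq_bigr => a _; rewrite mulrC.
Qed.

Lemma step_exp_service q k :
  step_exp q (fun _ s _ => (s k : nat)%:R) = pmf_mean Smax (pS k).
Proof.
rewrite (@eq_step_exp q _ (fun a s _ => 1 * (s k : nat)%:R)) => [|a s i]; last first.
  by rewrite mul1r.
by rewrite step_exp_split sum_arrival_prob mul1r service_mean.
Qed.

Lemma unused_balance q eps :
  pmf_mean Amax pA = \sum_(n < N) pmf_mean Smax (pS n) - eps ->
  step_exp q (fun a s i => total (unused q a (svals s) i)) + total q =
  step_exp q (fun a s i => total (next_state q a (svals s) i)) + eps.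
Proof.
move=> mean_eq; rewrite -(step_exp_cst q (total q)) -step_expD.
rewrite (@eq_step_exp q _ (fun a s i => total (next_state q a (svals s) i) +
  ((\sum_(n < N) (s n : nat)%:R) + - a%:R))) => [|a s i]; last first.
  have := congr1 (fun x : nat => x%:R : R) (sum_next_state q a (svals s) i).
  by rewrite /total !natrD !natr_sum => ?; lra.
rewrite !step_expD step_expN step_exp_arrivals.
rewrite (step_exp_sum q (fun n a s i => (s n : nat)%:R)).
by under eq_bigr do rewrite step_exp_service; rewrite mean_eq; ring.
Qed.

Local Open Scope ereal_scope.

Lemma stat_expE pi f :
  stat_exp Amax Smax pA pS pol pi f = \esum_(q in [set: state N])
    (pi q * step_exp q (fun a s i => f (unused q a (svals s) i)))%:E.
Proof. by []. Qed.

Lemma esum_kernel (q : state N) (f : state N -> R) : (forall q', 0 <= f q')%R ->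
  \esum_(q' in [set: state N]) (Defs.kernel Amax Smax pA pS pol q q' * f q')%:E =
  (step_exp q (fun a s i => f (next_state q a (svals s) i)))%:E.
Proof.
move=> f_ge0.
have term_ge0 a (s : svec) i q' :
    0 <= (weight pA pS pol q a s i * (next_state q a (svals s) i == q')%:R * f q')%:E.
  by rewrite lee_fin mulr_ge0 ?f_ge0 // mulr_ge0 ?ler0n ?weight_ge0.
transitivity (\esum_(q' in [set: state N]) \sum_(a < Amax.+1) \sum_(s : svec)
  \sum_(i < N) (weight pA pS pol q a s i * (next_state q a (svals s) i == q')%:R * f q')%:E).
  apply: eq_esum => q' _; rewrite /Defs.kernel mulr_suml -sumEFin.
  apply: eq_bigr => a _; rewrite mulr_suml -sumEFin.
  by apply: eq_bigr => s _; rewrite mulr_suml -sumEFin.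
rewrite /step_exp -sumEFin esum_sum => [|q' a _ _]; last first.
  by apply: sume_ge0 => s _; apply: sume_ge0.
apply: eq_bigr => a _; rewrite -sumEFin esum_sum => [|q' s _ _]; last first.
  exact: sume_ge0.
apply: eq_bigr => s _; rewrite -sumEFin esum_sum => [|q' i _ _]; last exact: term_ge0.
apply: eq_bigr => i _.
set q1 := next_state q a (svals s) i.
rewrite -[RHS](@esum_pred1 _ _ q1 (fun q' => (weight pA pS pol q a s i * f q')%:E));
  last by rewrite lee_fin mulr_ge0 //; exact: weight_ge0.
by apply: eq_esum => q' _; rewrite eq_sym; case: eqP => [->|_]; rewrite ?mulr1 ?mulr0 ?mul0r.
Qed.

Lemma stationary_step_exp pi (f : state N -> R) :
  stationary Amax Smax pA pS pol pi -> (forall q, 0 <= f q)%R ->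
  \esum_(q in [set: state N]) (pi q * f q)%:E =
  \esum_(q in [set: state N])
    (pi q * step_exp q (fun a s i => f (next_state q a (svals s) i)))%:E.
Proof.
move=> [pi_ge0 _ pi_inv] f_ge0.
have K_ge0 q q' : (0 <= Defs.kernel Amax Smax pA pS pol q q')%R.
  apply: sumr_ge0 => a _; apply: sumr_ge0 => s _; apply: sumr_ge0 => i _.
  by rewrite mulr_ge0 ?ler0n ?weight_ge0.
transitivity (\esum_(q' in [set: state N]) \esum_(q in [set: state N])
    (f q')%:E * (pi q * Defs.kernel Amax Smax pA pS pol q q')%:E).
  apply: eq_esum => q' _; rewrite mulrC EFinM pi_inv esumZl // => q.
  by rewrite lee_fin mulr_ge0 ?pi_ge0 ?K_ge0.
rewrite exchange_esum => [|q' q]; last first.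
  by rewrite -EFinM lee_fin !mulr_ge0 ?pi_ge0 ?K_ge0 ?f_ge0.
apply: eq_esum => q _; rewrite EFinM -esum_kernel // -esumZl => [||q']; last 2 first.
- exact: pi_ge0.
- by rewrite lee_fin mulr_ge0 ?K_ge0 ?f_ge0.
by apply: eq_esum => q' _; rewrite -!EFinM; congr EFin; ring.
Qed.

Lemma stationary_mean_unused eps pi :
  (0 < eps)%R -> pmf_mean Amax pA = (\sum_(n < N) pmf_mean Smax (pS n) - eps)%R ->
  stationary Amax Smax pA pS pol pi -> finite_first_moment pi ->
  \esum_(q in [set: state N])
    (pi q * step_exp q (fun a s i => total (unused q a (svals s) i)))%:E = eps%:E.
Proof.
move=> eps_gt0 mean_eq st fm; have [pi_ge0 pi_sum1 _] := st.
set g := fun q => step_exp q (fun a s i => total (unused q a (svals s) i)).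
set h := fun q => step_exp q (fun a s i => total (next_state q a (svals s) i)).
have balance q : (g q + total q = h q + eps)%R := unused_balance q mean_eq.
set M := \esum_(q in [set: state N]) (pi q * total q)%:E.
have M_fin : M \is a fin_num.
  by rewrite ge0_fin_numE //; apply: esum_ge0 => q _; rewrite lee_fin mulr_ge0 ?total_ge0.
have pi_mul_ge0 q (x : R) : (0 <= x)%R -> 0 <= (pi q * x)%:E.
  by move=> x_ge0; rewrite lee_fin mulr_ge0.
have g_ge0 q : (0 <= g q)%R by apply: step_exp_ge0 => a s i; exact: total_ge0.
have h_ge0 q : (0 <= h q)%R by apply: step_exp_ge0 => a s i; exact: total_ge0.
(* Average [balance] against [pi]; stationarity turns the average of [h] back
   into [M], which is finite and cancels. *)
have : \esum_(q in [set: state N]) (pi q * g q)%:E + M = M + eps%:E.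
  rewrite -esumD => [|q _|q _]; last 2 first.
  - by rewrite pi_mul_ge0.
  - by rewrite pi_mul_ge0 ?total_ge0.
  transitivity (\esum_(q in [set: state N]) ((pi q * h q)%:E + eps%:E * (pi q)%:E)).
    apply: eq_esum => q _; rewrite -!EFinM -!EFinD -!mulrDr balance.
    by rewrite mulrDr [(eps * _)%R]mulrC.
  rewrite esumD => [|q _|q _]; last 2 first.
  - by rewrite pi_mul_ge0.
  - by rewrite -EFinM lee_fin mulr_ge0 ?pi_ge0 ?(ltW eps_gt0).
  rewrite esumZl ?(ltW eps_gt0) // pi_sum1 mule1 /M [in RHS]stationary_step_exp //.
  by move=> q; exact: total_ge0.
by move/(congr1 (fun x => x - M)); rewrite addeK // addeC addeK.
Qed.

End OneStep.

Lemma stat_exp_le (R : realType) (N Amax Smax : nat) (pA : nat -> R)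
    (pS : 'I_N -> nat -> R) (pol : state N -> 'I_N -> R) (eps : R)
    (pi : state N -> R) (f : ('I_N -> nat) -> R) (C : R) :
  lb_system Amax Smax pA pS pol eps -> stationary Amax Smax pA pS pol pi ->
  finite_first_moment pi -> 0 <= C ->
  (forall u : 'I_N -> nat, (forall n, u n <= Smax)%N -> f u <= C * total u) ->
  (stat_exp Amax Smax pA pS pol pi f <= (C * eps)%:E)%E.
Proof.
move=> [pA_pmf [pS_pmf [pol_ge0 [pol_sum1 [eps_gt0 mean_eq]]]]] st fm C_ge0 f_le.
have [pi_ge0 _ _] := st.
rewrite stat_expE EFinM.
rewrite -(stationary_mean_unused pA_pmf pS_pmf pol_ge0 pol_sum1 eps_gt0 mean_eq st fm).
rewrite -esumZl // => [|q]; last first.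
  rewrite lee_fin mulr_ge0 // (step_exp_ge0 pA_pmf pS_pmf pol_ge0) // => a s i.
  exact: total_ge0.
apply: le_esum => q _; rewrite -EFinM lee_fin mulrCA ler_wpM2l // -step_expZ.
apply: (ler_step_exp pA_pmf pS_pmf pol_ge0) => a s i; apply: f_le => n.
by rewrite (leq_trans (unused_le_service _ _ _ _ _)) // -ltnS.
Qed.

Lemma total_le (R : realType) (N Smax : nat) (u : 'I_N -> nat) :
  (forall n, u n <= Smax)%N -> total u <= N%:R * Smax%:R :> R.
Proof.
move=> u_le; rewrite mulr_natl -[X in _ *+ X](card_ord N) -sumr_const.
by apply: ler_sum => n _; rewrite ler_nat.
Qed.

Lemma norm1_sq_le (R : realType) (N Smax : nat) (u : 'I_N -> nat) :
  (forall n, u n <= Smax)%N -> @norm1_sq R N u <= N%:R * Smax%:R * total u.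
Proof. by move=> u_le; rewrite /norm1_sq expr2 ler_wpM2r ?total_ge0 ?total_le. Qed.

Lemma powR_le_mul (R : realType) (r x c : R) :
  1 < r -> 0 <= x <= c -> x `^ r <= c `^ (r - 1) * x.
Proof.
move=> r_gt1 /andP[x_ge0 x_le]; have [->|x_neq0] := eqVneq x 0.
  by rewrite powR0 ?mulr0 // gt_eqF // (lt_trans ltr01).
have -> : x `^ r = x `^ (r - 1) * x.
  by rewrite -[in LHS](subrK 1 r) (@powRD _ x (r - 1) 1) ?x_neq0 ?implybT // powRr1.
rewrite ler_wpM2r // ge0_ler_powR // ?nnegrE ?subr_ge0 ?(ltW r_gt1) //.
exact: le_trans x_ge0 x_le.
Qed.

Lemma normr_pow_le (R : realType) (N Smax : nat) (r : R) (u : 'I_N -> nat) :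
  1 < r -> (forall n, u n <= Smax)%N -> normr_pow r u <= Smax%:R `^ (r - 1) * total u.
Proof.
move=> r_gt1 u_le; rewrite /normr_pow /total mulr_sumr; apply: ler_sum => n _.
by apply: powR_le_mul; rewrite // ler0n ler_nat u_le.
Qed.

Theorem lemma2 (R : realType) (N Smax : nat) :
  (forall (Q : nat -> state N) (A : nat -> nat) (Sv : nat -> 'I_N -> nat)
          (route : nat -> 'I_N),
     (forall t, Q t.+1 = next_state (Q t) (A t) (Sv t) (route t)) ->
     forall (t : nat) (n : 'I_N),
       ((Q t.+1) n * unused (Q t) (A t) (Sv t) (route t) n = 0)%N)
  /\
  (exists c1 : R, forall (Amax : nat) (pA : nat -> R) (pS : 'I_N -> nat -> R)
       (pol : state N -> 'I_N -> R) (eps : R) (pi : state N -> R),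
     lb_system Amax Smax pA pS pol eps ->
     stationary Amax Smax pA pS pol pi ->
     finite_first_moment pi ->
     (stat_exp Amax Smax pA pS pol pi (@norm1_sq R N) <= (c1 * eps)%:E)%E)
  /\
  (forall r : R, 1 < r ->
   exists cr : R, forall (Amax : nat) (pA : nat -> R) (pS : 'I_N -> nat -> R)
       (pol : state N -> 'I_N -> R) (eps : R) (pi : state N -> R),
     lb_system Amax Smax pA pS pol eps ->
     stationary Amax Smax pA pS pol pi ->
     finite_first_moment pi ->
     (stat_exp Amax Smax pA pS pol pi (normr_pow r) <= (cr * eps)%:E)%E).
Proof.
split; first by move=> Q A Sv route QE t n; rewrite QE next_state_mul_unused.
split.
  exists (N%:R * Smax%:R) => Amax pA pS pol eps pi sys st fm.
  apply: stat_exp_le sys st fm _ _; first by rewrite mulr_ge0.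
  exact: norm1_sq_le.
move=> r r_gt1; exists (Smax%:R `^ (r - 1)) => Amax pA pS pol eps pi sys st fm.
apply: stat_exp_le sys st fm (powR_ge0 _ _) _ => u; exact: normr_pow_le.
Qed.
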